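(* Consider a drone cellular network in which drone base stations (DBSs) lie in the plane $z=h$ (the DBS plane), $h>0$, and a typical user equipment (UE) is located at the origin $\mathbf{o}=(0,0,0)$; let $\mathbf{o}'=(0,0,h)$. Suppose every DBS moves in the DBS plane along a straight line, each in its own direction, and all DBSs move with the same constant speed $v>0$ (same speed model, SSM). At each time $t$ the serving DBS of the typical UE is the DBS closest to the UE (equivalently, the DBS whose position minimizes the distance to $\mathbf{o}'$). Let $D_0$ be the serving DBS at time $t=t_0$, and suppose that a handover occurs at time $t=t_1>t_0$, after which the DBS $D_1$ becomes the serving DBS. Then $D_0$ cannot become the serving DBS again at any time $t>t_1$.
   Context: A handover occurs when the serving DBS (the nearest DBS to the typical UE) changes. *)

From mathcomp Require Import all_boot all_order all_algebra.
Set Implicit Arguments. Unset Strict Implicit. Unset Printing Implicit Defensive.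
Import Order.TTheory GRing.Theory Num.Theory.
Local Open Scope ring_scope.

(* Same speed model.  DBS i starts at (x1 i, x2 i, h) at time 0 and moves in the
   plane z = h along the unit direction (u1 i, u2 i) with common speed v. *)
Definition dbs_pos1 (R : rcfType) (I : Type) (x1 u1 : I -> R) (v : R) (i : I) (t : R) : R :=
  x1 i + v * t * u1 i.

Definition dbs_dist (R : rcfType) (I : Type) (h v : R) (x1 x2 u1 u2 : I -> R)
  (i : I) (t : R) : R :=
  Num.sqrt ((dbs_pos1 x1 u1 v i t) ^+ 2 + (dbs_pos1 x2 u2 v i t) ^+ 2 + h ^+ 2).

Definition serving (R : rcfType) (I : Type) (h v : R) (x1 x2 u1 u2 : I -> R)
  (t : R) (i : I) : Prop :=
  forall j : I, j <> i -> dbs_dist h v x1 x2 u1 u2 i t < dbs_dist h v x1 x2 u1 u2 j t.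

From mathcomp Require Import all_boot all_order all_algebra.
From mathcomp Require Import ring lra.
Set Implicit Arguments. Unset Strict Implicit. Unset Printing Implicit Defensive.
Import Order.TTheory GRing.Theory Num.Theory.
Local Open Scope ring_scope.

(* Since all DBSs have the same speed, the squared distance of every DBS to the
   UE is a quadratic in t with the same leading term (v t)^2.  Hence the
   difference of the squared distances of two DBSs is affine in t and changes
   sign at most once: once D1 has overtaken D0 it stays closer forever. *)

Lemma lines_cross_once (R : realFieldType) (a0 b0 a1 b1 t0 s t : R) :
  t0 < s <= t ->
  a0 + t0 * b0 < a1 + t0 * b1 -> a1 + s * b1 < a0 + s * b0 ->
  a1 + t * b1 < a0 + t * b0.
Proof. by move=> /andP[? ?] ? ?; nra. Qed.

Section SameSpeedModel.

Variables (R : rcfType) (I : Type) (h v : R) (x1 x2 u1 u2 : I -> R).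
Hypothesis h_gt0 : 0 < h.
Hypothesis u_unit : forall i, u1 i ^+ 2 + u2 i ^+ 2 = 1.

Local Notation dist := (dbs_dist h v x1 x2 u1 u2).

Definition dbs_sqdist (i : I) (t : R) : R :=
  dbs_pos1 x1 u1 v i t ^+ 2 + dbs_pos1 x2 u2 v i t ^+ 2 + h ^+ 2.

Lemma dbs_sqdist_gt0 i t : 0 < dbs_sqdist i t.
Proof.
by rewrite /dbs_sqdist ltr_wpDl ?addr_ge0 ?sqr_ge0 // exprn_gt0.
Qed.

Lemma dbs_dist_lt i j t : (dist i t < dist j t) = (dbs_sqdist i t < dbs_sqdist j t).
Proof. exact/ltr_sqrt/dbs_sqdist_gt0. Qed.

Lemma dbs_sqdistE i t :
  dbs_sqdist i t = (x1 i ^+ 2 + x2 i ^+ 2 + h ^+ 2)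
                   + t * (2 * v * (x1 i * u1 i + x2 i * u2 i)) + (v * t) ^+ 2.
Proof.
have -> : (v * t) ^+ 2 = (v * t) ^+ 2 * (u1 i ^+ 2 + u2 i ^+ 2).
  by rewrite u_unit mulr1.
by rewrite /dbs_sqdist /dbs_pos1; ring.
Qed.

Lemma dbs_dist_lt_persists i j t0 s t :
  t0 < s <= t -> dist i t0 < dist j t0 -> dist j s < dist i s ->
  dist j t < dist i t.
Proof. by rewrite !dbs_dist_lt !dbs_sqdistE !ltrD2r; apply: lines_cross_once. Qed.

End SameSpeedModel.

Theorem lemma2 (R : rcfType) (I : Type) (h v : R) (x1 x2 u1 u2 : I -> R)
  (D0 D1 : I) (t0 t1 : R) :
  0 < h -> 0 < v ->
  (forall i, u1 i ^+ 2 + u2 i ^+ 2 = 1) ->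
  t0 < t1 ->
  (* D0 is the serving DBS from t0 until the handover time t1 *)
  (forall t, t0 <= t < t1 -> serving h v x1 x2 u1 u2 t D0) ->
  (* handover at t1: right after t1 the serving DBS is D1 <> D0 *)
  D1 <> D0 ->
  (exists2 eps : R, 0 < eps &
     forall t, t1 < t < t1 + eps -> serving h v x1 x2 u1 u2 t D1) ->
  forall t, t1 < t -> ~ serving h v x1 x2 u1 u2 t D0.
Proof.
move=> h_gt0 _ u_unit t01 serve0 D10 [eps eps_gt0 serve1] t t1t serve0_t.
have D01 : D0 <> D1 by move=> /esym.
pose m := Num.min (t - t1) eps.
have m_gt0 : 0 < m by rewrite lt_min subr_gt0 t1t.
have [m_le_t m_le_eps] : m <= t - t1 /\ m <= eps by rewrite !ge_min !lexx orbT.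
pose s := t1 + m / 2.
have s_window : t1 < s < t1 + eps by apply/andP; split; rewrite /s; lra.
have t0_s_t : t0 < s <= t by apply/andP; split; rewrite /s; lra.
have closer0 := serve0 t0 ltac:(by rewrite lexx) D1 D10.
have serve1_s := serve1 s s_window.
have closer1 := dbs_dist_lt_persists h_gt0 u_unit t0_s_t closer0 (serve1_s D0 D01).
by have := lt_trans (serve0_t D1 D10) closer1; rewrite ltxx.
Qed.
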